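(* Let $Z$ be a feasible point of the SDP relaxation described in the context, with first-row data $(z_+,z_-,\rho)$, and let $(x_+^{Q},x_-^{Q},r^{Q})$ be its reconstruction, i.e. $x_\pm^{Q}=z_\pm$ and $r^{Q}=\max\{r\in[0,1]: (A_\delta z_+ + A_\delta z_- + b_\delta)\,r + A_c z_+ - A_c z_- - b_c\le 0\}$. If $(x_+^{Q},x_-^{Q})$ is a strictly efficient solution of the LP of robustness level $r^{Q}$, then $(x_+^{Q},x_-^{Q},r^{Q})$ is an efficient solution of the QCQP.
   Context: Let $k,m,n\in\mathbb{N}$. Let $A_c,A_\delta\in\mathbb{R}^{m\times n}$ with $A_\delta\ge 0$ entrywise, $b_c,b_\delta\in\mathbb{R}^m$ with $b_\delta\ge0$, $G\in\mathbb{R}^{k\times n}$, and $\ell,u\in\mathbb{R}^n$ with $\ell\le u$. All vector inequalities are componentwise. QCQP: variables $x_+,x_-\in\mathbb{R}^n_{\ge0}$, $r\in[0,1]$, subject to $A_cx_+-A_cx_-+rA_\delta x_++rA_\delta x_-+rb_\delta-b_c\le0$ and $\ell\le x_+-x_-\le u$; vector objective $F(x_+,x_-,r)=(G(x_+-x_-),-r)\in\mathbb{R}^{k+1}$, minimized in the Pareto sense. LP of robustness level $r$ (for fixed $r\in[0,1]$): variables $x_+,x_-\in\mathbb{R}^n_{\ge0}$, subject to $(A_c+rA_\delta)x_+-(A_c-rA_\delta)x_-\le b_c-rb_\delta$ and $\ell\le x_+-x_-\le u$; vector objective $G(x_+-x_-)\in\mathbb{R}^k$, minimized in the Pareto sense.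 SDP relaxation: variable a symmetric positive semidefinite matrix $Z$ of size $(2n+2)\times(2n+2)$ written in block form with row/column blocks of sizes $1,n,n,1$: $Z=\begin{pmatrix} Z_{00} & z_+^T & z_-^T & \rho\\ z_+ & * & * & w_+\\ z_- & * & * & w_-\\ \rho & w_+^T & w_-^T & \sigma\end{pmatrix}$, with $z_\pm,w_\pm\in\mathbb{R}^n$, $\rho,\sigma\in\mathbb{R}$. Constraints: $Z_{00}=1$; $A_cz_+-A_cz_-+A_\delta(w_++w_-)+\rho\, b_\delta-b_c\le0$; $\ell\le z_+-z_-\le u$; $z_+,z_-\ge0$, $\rho\ge0$, $w_+,w_-\ge0$; $\sigma\le1$. Vector objective $(G(z_+-z_-),-\rho)\in\mathbb{R}^{k+1}$, minimized in the Pareto sense. Efficiency (for minimizing a vector function $f$ over a feasible set $\mathcal{X}$): $x^*\in\mathcal{X}$ is efficient if there is no $x\in\mathcal{X}$ with $f(x)\le f(x^* )$ and $f(x)\ne f(x^* )$; weakly efficient if there is no $x\in\mathcal{X}$ with $f(x)<f(x^* )$ (all components strict); strictly efficient if there is no $x\in\mathcal{X}$, $x\neq x^*$, with $f(x)\le f(x^* )$. For $\epsilon\ge0$, $x^*$ is weakly $\epsilon$-efficient if there is no $x\in\mathcal{X}$ with $f(x)<f(x^* )-\epsilon\mathbb{1}$, where $\mathbb{1}$ is the all-ones vector. *)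

From mathcomp Require Import all_boot all_order all_algebra.
Set Implicit Arguments. Unset Strict Implicit. Unset Printing Implicit Defensive.
Import Order.TTheory GRing.Theory Num.Theory.
Local Open Scope ring_scope.

Section Defs.
Variable R : realFieldType.

Definition vle (p : nat) (u v : 'cV[R]_p) : Prop := forall i, u i ord0 <= v i ord0.
Definition vlt (p : nat) (u v : 'cV[R]_p) : Prop := forall i, u i ord0 < v i ord0.

Definition efficient (T : Type) (p : nat) (X : T -> Prop) (f : T -> 'cV[R]_p) (x : T) : Prop :=
  X x /\ ~ (exists y, X y /\ vle (f y) (f x) /\ f y <> f x).
Definition strictly_efficient (T : Type) (p : nat) (X : T -> Prop) (f : T -> 'cV[R]_p) (x : T) : Prop :=
  X x /\ ~ (exists y, X y /\ y <> x /\ vle (f y) (f x)).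

Variables (k m n : nat).
Variables (Ac Ad : 'M[R]_(m, n)) (bc bd : 'cV[R]_m) (G : 'M[R]_(k, n)) (l u : 'cV[R]_n).

Definition qcqp_feasible (t : 'cV[R]_n * 'cV[R]_n * R) : Prop :=
  let: (xp, xm, r) := t in
  [/\ vle 0 xp, vle 0 xm, 0 <= r <= 1,
      vle (Ac *m xp - Ac *m xm + r *: (Ad *m xp) + r *: (Ad *m xm) + r *: bd - bc) 0
    & vle l (xp - xm) /\ vle (xp - xm) u].

Definition qcqp_obj (t : 'cV[R]_n * 'cV[R]_n * R) : 'cV[R]_(k + 1) :=
  let: (xp, xm, r) := t in col_mx (G *m (xp - xm)) (const_mx (- r)).

Definition lp_feasible (r : R) (t : 'cV[R]_n * 'cV[R]_n) : Prop :=
  let: (xp, xm) := t in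
  [/\ vle 0 xp, vle 0 xm,
      vle ((Ac + r *: Ad) *m xp - (Ac - r *: Ad) *m xm) (bc - r *: bd)
    & vle l (xp - xm) /\ vle (xp - xm) u].

Definition lp_obj (t : 'cV[R]_n * 'cV[R]_n) : 'cV[R]_k :=
  let: (xp, xm) := t in G *m (xp - xm).

(* SDP relaxation: Z of size (2n+2) x (2n+2) with row/column blocks of sizes 1,n,n,1:
   index 0; indices 1..n (the "+" block); n+1..2n (the "-" block); 2n+1. *)
Definition ix_p (j : 'I_n) : 'I_(n.*2.+2) := inord (1 + j).
Definition ix_m (j : 'I_n) : 'I_(n.*2.+2) := inord (1 + n + j).
Definition ix_last : 'I_(n.*2.+2) := inord (n.*2.+1).

Definition sdp_zp (Z : 'M[R]_(n.*2.+2)) : 'cV[R]_n := \col_j Z (ix_p j) ord0.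
Definition sdp_zm (Z : 'M[R]_(n.*2.+2)) : 'cV[R]_n := \col_j Z (ix_m j) ord0.
Definition sdp_rho (Z : 'M[R]_(n.*2.+2)) : R := Z ix_last ord0.
Definition sdp_wp (Z : 'M[R]_(n.*2.+2)) : 'cV[R]_n := \col_j Z (ix_p j) ix_last.
Definition sdp_wm (Z : 'M[R]_(n.*2.+2)) : 'cV[R]_n := \col_j Z (ix_m j) ix_last.
Definition sdp_sigma (Z : 'M[R]_(n.*2.+2)) : R := Z ix_last ix_last.

Definition psd (p : nat) (M : 'M[R]_p) : Prop :=
  M^T = M /\ forall v : 'cV[R]_p, 0 <= (v^T *m M *m v) ord0 ord0.

Definition sdp_feasible (Z : 'M[R]_(n.*2.+2)) : Prop :=
  [/\ psd Z /\ Z ord0 ord0 = 1,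
      vle (Ac *m sdp_zp Z - Ac *m sdp_zm Z + Ad *m (sdp_wp Z + sdp_wm Z)
           + sdp_rho Z *: bd - bc) 0,
      vle l (sdp_zp Z - sdp_zm Z) /\ vle (sdp_zp Z - sdp_zm Z) u,
      [/\ vle 0 (sdp_zp Z), vle 0 (sdp_zm Z), 0 <= sdp_rho Z,
          vle 0 (sdp_wp Z) & vle 0 (sdp_wm Z)]
    & sdp_sigma Z <= 1].

Definition recon_ok (Z : 'M[R]_(n.*2.+2)) (r : R) : Prop :=
  0 <= r <= 1 /\
  vle (r *: (Ad *m sdp_zp Z + Ad *m sdp_zm Z + bd) + Ac *m sdp_zp Z - Ac *m sdp_zm Z - bc) 0.

Definition is_recon_r (Z : 'M[R]_(n.*2.+2)) (rQ : R) : Prop :=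
  recon_ok Z rQ /\ forall r, recon_ok Z r -> r <= rQ.

End Defs.

From mathcomp Require Import all_boot all_order all_algebra.
From mathcomp Require Import ring.
Set Implicit Arguments. Unset Strict Implicit. Unset Printing Implicit Defensive.
Import Order.TTheory GRing.Theory Num.Theory.
Local Open Scope ring_scope.

(* The QCQP constraint at level r and the LP of robustness level r share the
   slack  r (A_d x_+ + A_d x_- + b_d) + A_c x_+ - A_c x_- - b_c,  which is
   nondecreasing in r because A_d, b_d and x_+- are nonnegative.  A point
   (y_+, y_-, r) dominating the reconstruction has r >= r^Q, hence (y_+, y_-)
   is LP-feasible at level r^Q with no worse G-objective; strict efficiency
   forces y = z, so r belongs to the set whose maximum is r^Q, giving r = r^Q
   and equal objectives. *)

Lemma vle_trans (R : realFieldType) p (u v w : 'cV[R]_p) :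
  vle u v -> vle v w -> vle u w.
Proof. by move=> uv vw i; apply: le_trans (uv i) (vw i). Qed.

Lemma vle_subr0 (R : realFieldType) p (u v : 'cV[R]_p) :
  vle u v <-> vle (u - v) 0.
Proof. by split=> H i; have := H i; rewrite !mxE subr_le0. Qed.

Lemma mulmx_vge0 (R : realFieldType) m n (A : 'M[R]_(m, n)) (x : 'cV[R]_n) :
  (forall i j, 0 <= A i j) -> vle 0 x -> vle 0 (A *m x).
Proof.
move=> A_ge0 x_ge0 i; rewrite !mxE; apply: sumr_ge0 => j _.
by apply: mulr_ge0 => //; have := x_ge0 j; rewrite mxE.
Qed.

Section RobustSlack.
Variables (R : realFieldType) (k m n : nat).
Variables (Ac Ad : 'M[R]_(m, n)) (bc bd : 'cV[R]_m) (G : 'M[R]_(k, n)).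
Variables (l u : 'cV[R]_n).

Definition robust_slack (r : R) (xp xm : 'cV[R]_n) : 'cV[R]_m :=
  r *: (Ad *m xp + Ad *m xm + bd) + Ac *m xp - Ac *m xm - bc.

Lemma qcqp_feasibleE xp xm r :
  qcqp_feasible Ac Ad bc bd l u (xp, xm, r) <->
  [/\ vle 0 xp, vle 0 xm, 0 <= r <= 1, vle (robust_slack r xp xm) 0
    & vle l (xp - xm) /\ vle (xp - xm) u].
Proof.
rewrite /qcqp_feasible.
suff -> : Ac *m xp - Ac *m xm + r *: (Ad *m xp) + r *: (Ad *m xm) + r *: bd - bc
          = robust_slack r xp xm by [].
by apply/matrixP => i j; rewrite !mxE; ring.
Qed.

Lemma lp_feasibleE r xp xm :
  lp_feasible Ac Ad bc bd l u r (xp, xm) <->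
  [/\ vle 0 xp, vle 0 xm, vle (robust_slack r xp xm) 0
    & vle l (xp - xm) /\ vle (xp - xm) u].
Proof.
have slackE : (Ac + r *: Ad) *m xp - (Ac - r *: Ad) *m xm - (bc - r *: bd)
              = robust_slack r xp xm.
  rewrite mulmxDl mulmxBl -!scalemxAl.
  by apply/matrixP => i j; rewrite !mxE; ring.
split=> [[? ? /vle_subr0 ? ?] | [? ? ? ?]]; split=> //.
  by rewrite -slackE.
by apply/vle_subr0; rewrite slackE.
Qed.

Lemma robust_slack_le r s xp xm :
  (forall i j, 0 <= Ad i j) -> vle 0 bd -> vle 0 xp -> vle 0 xm ->
  r <= s -> vle (robust_slack r xp xm) (robust_slack s xp xm).
Proof.
move=> Ad_ge0 bd_ge0 xp_ge0 xm_ge0 le_rs i.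
have := mulmx_vge0 Ad_ge0 xp_ge0 i; have := mulmx_vge0 Ad_ge0 xm_ge0 i.
have := bd_ge0 i; rewrite !mxE => ? ? ?.
by rewrite !lerD2r ler_wpM2r // !addr_ge0.
Qed.

Lemma vle_qcqp_obj xp xm r yp ym s :
  vle (qcqp_obj G (yp, ym, s)) (qcqp_obj G (xp, xm, r)) ->
  vle (lp_obj G (yp, ym)) (lp_obj G (xp, xm)) /\ r <= s.
Proof.
move=> le_obj; split=> [i|].
  by have := le_obj (lshift 1 i); rewrite /= !col_mxEu.
by have := le_obj (rshift k ord0); rewrite /= !col_mxEd !mxE lerN2.
Qed.

End RobustSlack.

Theorem mainTheorem1 (R : realFieldType) (k m n : nat)
  (Ac Ad : 'M[R]_(m, n)) (bc bd : 'cV[R]_m) (G : 'M[R]_(k, n)) (l u : 'cV[R]_n)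
  (HAd : forall i j, 0 <= Ad i j) (Hbd : vle 0 bd) (Hlu : vle l u)
  (Z : 'M[R]_(n.*2.+2)) (rQ : R) :
  sdp_feasible Ac Ad bc bd l u Z ->
  is_recon_r Ac Ad bc bd Z rQ ->
  strictly_efficient (lp_feasible Ac Ad bc bd l u rQ) (lp_obj G) (sdp_zp Z, sdp_zm Z) ->
  efficient (qcqp_feasible Ac Ad bc bd l u) (qcqp_obj G) (sdp_zp Z, sdp_zm Z, rQ).
Proof.
move=> [_ _ z_box [zp_ge0 zm_ge0 _ _ _] _] [[rQ01 rQ_slack] rQ_max] [_ z_strict].
split; first by apply/qcqp_feasibleE.
move=> [[[yp ym] r] [/qcqp_feasibleE [yp_ge0 ym_ge0 r01 r_slack y_box]]].
move=> [/vle_qcqp_obj [le_Gy le_rQr] neq_obj].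
have y_lp : lp_feasible Ac Ad bc bd l u rQ (yp, ym).
  apply/lp_feasibleE; split=> //.
  by apply: vle_trans r_slack; apply: robust_slack_le.
have [[eq_yp eq_ym] | y_neq_z] := eqVneq (yp, ym) (sdp_zp Z, sdp_zm Z); last first.
  by apply: z_strict; exists (yp, ym); split=> //; split=> //; apply/eqP.
subst yp ym.
have le_r_rQ : r <= rQ by apply: rQ_max; split.
by apply: neq_obj; have -> : r = rQ by apply/eqP; rewrite eq_le le_r_rQ.
Qed.
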